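(* For MLAPD on a path of depth $D$ (the tree $\mathcal{T}$ is a path graph with $D$ nodes whose root $r$ is an endpoint), the online algorithm \textsc{Double} is $(4-2^{-D})$-competitive.
   Context: MLAPD: an instance is a rooted tree $\mathcal{T}$ with root $r$ and positive node costs $c(v)>0$, together with a set $\mathcal{R}$ of requests $\rho=(v,a,d)$ (node, arrival time, deadline $d\ge a$; deadlines distinct). A service $(S,t)$ is a subtree $S\ni r$ transmitted at time $t$, costing $c(S)=\sum_{u\in S}c(u)$; it satisfies $(v,a,d)$ if $v\in S$ and $a\le t\le d$. A feasible schedule satisfies every request; its cost is the sum of service costs. Online: requests revealed at arrival. $c$-competitive: cost at most $c$ times optimal on every instance. For request $\rho$ at $v$, $P_\rho$ is the set of nodes on the $r$–$v$ path; for a node set $S$, $c(r\to\gamma\mid S)=c(P_\gamma\setminus S)$. A request is pending at time $t$ if it has arrived by $t$ and was not satisfied by earlier transmissions. \textsc{Double}: when a pending request $\rho$ reaches its deadline $d_\rho$, set $S=P_\rho$; then repeat: if no pending request is unsatisfied by $S$, stop; otherwise let $\gamma$ be the pending request with earliest deadline not satisfied by $S$; if $c(S)+c(r\to\gamma\mid S)>2c(P_\rho)$ stop, else set $S\gets S\cup P_\gamma$. Finally transmit $(S,d_\rho)$. *)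

From mathcomp Require Import all_boot all_order all_algebra.
Set Implicit Arguments. Unset Strict Implicit. Unset Printing Implicit Defensive.
Import Order.TTheory GRing.Theory Num.Theory.
Local Open Scope ring_scope.

(* The tree is the path graph on nodes 'I_D: node 0 is the root (an endpoint)
   and the parent of node v > 0 is node v - 1. *)

Record request (D : nat) (R : Type) := Request {
  rnode : 'I_D ; rarr : R ; rdl : R }.

Section MLAPD.
Variables (R : realFieldType) (D : nat).

Definition rooted_subtree (S : {set 'I_D}) : bool :=
  [exists u in S, val u == 0%N] &&
  [forall u : 'I_D, forall v : 'I_D, ((v \in S) && (val u + 1 == val v)%N) ==> (u \in S)].

Definition set_cost (c : 'I_D -> R) (S : {set 'I_D}) : R := \sum_(u in S) c u.

Definition service := ({set 'I_D} * R)%type.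

Definition satisfies (st : service) (rho : request D R) : bool :=
  (rnode rho \in st.1) && (rarr rho <= st.2 <= rdl rho).

Definition sched_cost (c : 'I_D -> R) (sch : seq service) : R :=
  \sum_(st <- sch) set_cost c st.1.

Definition feasible (rs : seq (request D R)) (sch : seq service) : Prop :=
  all (fun st => rooted_subtree st.1) sch /\
  all (fun rho => has (fun st => satisfies st rho) sch) rs.

Definition rpath (rho : request D R) : {set 'I_D} :=
  [set u : 'I_D | (val u <= val (rnode rho))%N].

Definition pending (past : seq service) (t : R) (rho : request D R) : bool :=
  (rarr rho <= t) && ~~ has (fun st => (st.2 < t) && satisfies st rho) past.

Definition min_dl (s : seq (request D R)) : option (request D R) :=
  foldr (fun x acc => match acc with
                      | None => Some x
                      | Some y => if rdl x < rdl y then Some x else Some y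
                      end) None s.

(* The growing loop of Double, triggered by rho at time t = d_rho.
   Each non-stopping iteration strictly enlarges S, so D.+1 rounds of fuel
   always suffice for the loop to stop by itself. *)
Fixpoint double_grow (c : 'I_D -> R) (rs : seq (request D R)) (past : seq service)
    (rho : request D R) (fuel : nat) (S : {set 'I_D}) : {set 'I_D} :=
  match fuel with
  | 0%N => S
  | n.+1 =>
    let t := rdl rho in
    match min_dl [seq g <- rs | pending past t g && ~~ satisfies (S, t) g] with
    | None => S
    | Some g =>
        if set_cost c S + set_cost c (rpath g :\: S) > 2 * set_cost c (rpath rho)
        then S
        else double_grow c rs past rho n (S :|: rpath g)
    end
  end.

Definition Double (c : 'I_D -> R) (rs : seq (request D R)) : seq service :=
  foldl (fun past rho =>
           if pending past (rdl rho) rho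
           then rcons past (double_grow c rs past rho D.+1 (rpath rho), rdl rho)
           else past)
        [::] (sort (fun x y => rdl x <= rdl y) rs).

End MLAPD.
Arguments rooted_subtree {D} S.
Arguments set_cost {R D} c S.
Arguments satisfies {R D} st rho.
Arguments sched_cost {R D} c sch.
Arguments feasible {R D} rs sch.
Arguments rpath {R D} rho.
Arguments pending {R D} past t rho.
Arguments min_dl {R D} s.
Arguments double_grow {R D} c rs past rho fuel S.
Arguments Double {R D} c rs.

From HB Require Import structures.
From mathcomp Require Import all_boot all_order all_algebra.
From mathcomp Require Import ring lra zify.
Import Order.TTheory GRing.Theory Num.Theory.
Local Open Scope ring_scope.
Set Implicit Arguments. Unset Strict Implicit. Unset Printing Implicit Defensive.

(* Write w(rho) = c(P_rho). The proof follows the charging argument of the paper.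
   - Output of Double: since services transmitted later cannot affect earlier
     ones, Double outputs one service per trigger (a request pending at its own
     deadline), computed from the final output itself (Double_services). Each
     such service is down-closed, contains P_rho and costs at most 2 w(rho),
     because the growing loop never exceeds this budget; feasibility follows.
   - Separation: if two triggers rho, rho' with d_rho < d_rho' have overlapping
     windows, then 2 w(rho) < w(rho') (triggers_separated): the loop at d_rho
     stopped on a request that lies on the path of rho'.
   - Charging: charge every trigger to the first service (S, t) of an arbitrary
     feasible schedule serving it. The triggers charged to (S, t) all contain t
     in their windows, so their weights form a doubling sequence of at most D
     terms bounded by c(S); a geometric sum (doubling_sum_bound) bounds twice
     their total by (4 - 2^(-D)) c(S). *)

Definition request_tuple D (R : Type) (r : request D R) : 'I_D * R * R :=
  (rnode r, rarr r, rdl r).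
Definition tuple_request D (R : Type) (x : 'I_D * R * R) : request D R :=
  Request x.1.1 x.1.2 x.2.
Lemma request_tupleK D R : cancel (@request_tuple D R) (@tuple_request D R).
Proof. by case. Qed.
HB.instance Definition _ D (R : eqType) :=
  Equality.copy (request D R) (can_type (@request_tupleK D R)).

Section DoublingSequences.
Variable R : realFieldType.

Local Notation doubling := (fun a b : R => 2 * a < b).

Lemma doubling_head (x : R) xs : sorted doubling (x :: xs) ->
  x * 2 ^+ size xs <= last x xs.
Proof.
elim: xs x => [|y ys IH] x /=; first by rewrite mulr1.
move=> /andP[hxy hys]; apply: le_trans (IH y hys).
rewrite exprS mulrA; apply: ler_wpM2r; [exact: exprn_ge0 | lra].
Qed.

Lemma doubling_sum (x : R) xs : sorted doubling (x :: xs) ->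
  (\sum_(y <- x :: xs) y) * 2 ^+ size xs <= (2 ^+ (size xs).+1 - 1) * last x xs.
Proof.
elim: xs x => [|y ys IH] x hs; first by rewrite /= big_seq1; lra.
have /andP[_ hys] := hs.
have := IH y hys; have := doubling_head hs; rewrite /= big_cons !exprS.
set p := 2 ^+ size ys; set l := last y ys => hx hsum.
rewrite !big_cons; nra.
Qed.

(* At most D nonnegative doubling terms bounded by M sum to at most
   (2 - 2^(-D)/2) M: this is where the competitive ratio 4 - 2^(-D) comes from. *)
Lemma doubling_sum_bound (D : nat) (xs : seq R) (M : R) :
  sorted doubling xs -> all (fun x => 0 <= x <= M) xs -> 0 <= M ->
  (size xs <= D)%N -> 2 * \sum_(x <- xs) x <= (4 - (2 ^+ D)^-1) * M.
Proof.
set q : R := 2 ^+ D.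
have hq1 : 1 <= q by apply: exprn_ege1; lra.
have hqinv1 : q^-1 <= 1 by rewrite invf_le1 //; lra.
case: xs => [|x xs] hs hall hM hsz; first by rewrite big_nil; nra.
have /andP[hl0 hlM] : 0 <= last x xs <= M by move/allP: hall; apply; exact: mem_last.
set l := last x xs in hlM hl0 *; set p : R := 2 ^+ size xs.
have hp0 : 0 < p by apply: exprn_gt0; lra.
have hpq : 2 * q^-1 <= p^-1.
  have -> : 2 * q^-1 = (q / 2)^-1 by rewrite invfM invrK mulrC.
  rewrite lef_pV2 ?posrE ?divr_gt0 //; try lra.
  by rewrite ler_pdivlMr // /p /q -exprSr ler_eXn2l //; lra.
have hsum : \sum_(y <- x :: xs) y <= (2 - p^-1) * l.
  have -> : (2 - p^-1) * l = (2 * p - 1) * l / p by field; rewrite gt_eqF.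
  by rewrite ler_pdivlMr // -exprS; exact: doubling_sum.
have h1 : (2 * q^-1) * l <= p^-1 * l by apply: ler_wpM2r.
have h2 : (4 - q^-1) * l <= (4 - q^-1) * M by apply: ler_wpM2l => //; lra.
have h0 : 0 <= q^-1 * l by rewrite mulr_ge0 // invr_ge0; lra.
lra.
Qed.
End DoublingSequences.

Section DownClosed.
Variable D : nat.

(* On a path rooted at node 0, rooted subtrees are exactly the nonempty sets
   closed under going towards the root. *)
Definition down_closed (S : {set 'I_D}) : Prop :=
  forall u v : 'I_D, (val u <= val v)%N -> v \in S -> u \in S.

Lemma down_closedU (A B : {set 'I_D}) :
  down_closed A -> down_closed B -> down_closed (A :|: B).
Proof.
move=> hA hB u v huv; rewrite !inE => /orP[hv|hv].
- by rewrite (hA u v huv hv).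
- by rewrite (hB u v huv hv) orbT.
Qed.

Lemma rooted_subtree_down_closed (S : {set 'I_D}) :
  rooted_subtree S -> down_closed S.
Proof.
move=> /andP[_ /forallP hpar].
have parent_in k : forall u v : 'I_D, v \in S -> (val u + k)%N = val v -> u \in S.
  elim: k => [|k IH] u v hv e.
    by have -> : u = v by apply: val_inj; rewrite /= -e addn0.
  have hvD : (val v < D)%N := ltn_ord v.
  have hu1 : (val u + 1 < D)%N by lia.
  have /IH hu' : (val (Ordinal hu1) + k)%N = val v.
    by rewrite /= -e addn1 addSnnS.
  by have /forallP /(_ (Ordinal hu1)) /implyP := hpar u; apply; rewrite hu' // eqxx.
move=> u v huv hv; exact: (parent_in (val v - val u)%N u v hv (subnKC huv)).
Qed.

Lemma down_closed_rooted (S : {set 'I_D}) (v : 'I_D) :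
  down_closed S -> v \in S -> rooted_subtree S.
Proof.
move=> hS hv; have hr : (0 < D)%N by exact: leq_ltn_trans (leq0n _) (ltn_ord v).
apply/andP; split.
  by apply/existsP; exists (Ordinal hr); rewrite (hS _ v).
apply/forallP => u; apply/forallP => w; apply/implyP => /andP[hw /eqP huw].
by apply: (hS u w) => //; rewrite -huw leq_addr.
Qed.

Lemma rpath_down_closed (R : realFieldType) (rho : request D R) : down_closed (rpath rho).
Proof. by move=> u v huv; rewrite !inE => hv; exact: leq_trans huv hv. Qed.

Lemma rpath_node (R : realFieldType) (rho : request D R) : rnode rho \in rpath rho.
Proof. by rewrite inE. Qed.

Lemma down_closed_rpath (R : realFieldType) (S : {set 'I_D}) (rho : request D R) :
  down_closed S -> rnode rho \in S -> rpath rho \subset S.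
Proof. by move=> hS hv; apply/subsetP => u; rewrite inE => hu; exact: hS hv. Qed.
End DownClosed.

Section Costs.
Variables (R : realFieldType) (D : nat) (c : 'I_D -> R).
Hypothesis hc : forall u, 0 < c u.

Lemma set_costU (A B : {set 'I_D}) :
  set_cost c (A :|: B) = set_cost c A + set_cost c (B :\: A).
Proof.
rewrite /set_cost (big_setID A); congr (_ + _); apply: eq_bigl => u;
  by rewrite !inE; case: (u \in A); case: (u \in B).
Qed.

Lemma set_cost_ge0 (A : {set 'I_D}) : 0 <= set_cost c A.
Proof. by apply: sumr_ge0 => u _; exact: ltW. Qed.

Lemma set_cost_sub (A B : {set 'I_D}) : A \subset B -> set_cost c A <= set_cost c B.
Proof. by move=> /setUidPr <-; rewrite set_costU lerDl set_cost_ge0. Qed.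
End Costs.

Section MinDeadline.
Variables (R : realFieldType) (D : nat).

Lemma min_dl_None (s : seq (request D R)) : min_dl s = None -> s = [::].
Proof. by case: s => //= x s; case: (min_dl s) => [y|] //; case: ifP. Qed.

Lemma min_dl_Some (s : seq (request D R)) g : min_dl s = Some g ->
  g \in s /\ forall y, y \in s -> rdl g <= rdl y.
Proof.
elim: s g => [//|x s IH] g /=.
case e: (min_dl s) => [y|]; last first.
  move=> [<-]; rewrite (min_dl_None e); split; first by rewrite inE.
  by move=> z; rewrite inE => /eqP->.
have [hy hmin] := IH y e.
case: ifP => hxy [<-].
- split; first by rewrite inE eqxx.
  move=> z; rewrite inE => /orP[/eqP->//|hz].
  exact: le_trans (ltW hxy) (hmin z hz).
- split; first by rewrite inE hy orbT.
  move=> z; rewrite inE => /orP[/eqP->|hz]; last exact: hmin.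
  by rewrite leNgt hxy.
Qed.
End MinDeadline.

Lemma double_grow_congr (R : realFieldType) (D : nat) (c : 'I_D -> R)
    (rs : seq (request D R)) (P Q : seq (service R D)) (rho : request D R) :
  (forall g, pending P (rdl rho) g = pending Q (rdl rho) g) ->
  forall n S, double_grow c rs P rho n S = double_grow c rs Q rho n S.
Proof.
move=> hPQ; elim=> [//|n IH] S /=.
rewrite (eq_filter (a2 := fun g => pending Q (rdl rho) g && ~~ satisfies (S, rdl rho) g));
  last by move=> g; rewrite hPQ.
by case: min_dl => // g; case: ifP.
Qed.

Section GrowingLoop.
Variables (R : realFieldType) (D : nat) (c : 'I_D -> R) (rs : seq (request D R)).
Variables (past : seq (service R D)) (rho : request D R).
Local Notation grow := (double_grow c rs past rho).
Local Notation t := (rdl rho).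

Lemma grow_sub n (S : {set 'I_D}) : S \subset grow n S.
Proof.
elim: n S => [|n IH] S /=; first exact: subxx.
case: min_dl => [g|]; last exact: subxx.
case: ifP => _; first exact: subxx.
exact: subset_trans (subsetUl _ _) (IH _).
Qed.

Lemma grow_down_closed n (S : {set 'I_D}) : down_closed S -> down_closed (grow n S).
Proof.
elim: n S => [|n IH] S hS //=.
case: min_dl => [g|] //; case: ifP => _ //.
by apply: IH; apply: down_closedU => //; exact: rpath_down_closed.
Qed.

Lemma grow_budget n (S : {set 'I_D}) :
  set_cost c S <= 2 * set_cost c (rpath rho) ->
  set_cost c (grow n S) <= 2 * set_cost c (rpath rho).
Proof.
elim: n S => [|n IH] S hS //=.
case: min_dl => [g|] //; case: ifP => hbudget //.
by apply: IH; rewrite set_costU leNgt hbudget.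
Qed.

Hypothesis pending_alive :
  forall g, g \in rs -> pending past t g -> t <= rdl g.

Lemma grow_stop n (S : {set 'I_D}) (rho' : request D R) :
  (D < #|S| + n)%N -> rho' \in rs -> pending past t rho' ->
  ~~ satisfies (grow n S, t) rho' ->
  exists g, [/\ g \in rs, pending past t g, ~~ satisfies (grow n S, t) g,
     rdl g <= rdl rho' &
     2 * set_cost c (rpath rho) <
       set_cost c (grow n S) + set_cost c (rpath g :\: grow n S)].
Proof.
elim: n S => [|n IH] S hfuel hr' hp'.
  have : (#|S| <= D)%N by rewrite -[X in (_ <= X)%N](card_ord D) max_card.
  by rewrite leqNgt -[#|S|]addn0 hfuel.
rewrite /=; case e: min_dl => [g|]; last first.
  move=> hns; have /(congr1 (fun s => rho' \in s)) := min_dl_None e.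
  by rewrite mem_filter hp' hns hr'.
have [hg hmin] := min_dl_Some e.
move: (hg); rewrite mem_filter => /andP[/andP[hpg hng] hgrs].
case: ifP => hbudget hns.
  by exists g; split => //; apply: hmin; rewrite mem_filter hp' hns hr'.
apply: IH => //.
have hgS : rnode g \notin S.
  apply: contra hng => hgS; rewrite /satisfies /= hgS /=.
  by apply/andP; split; [case/andP: hpg | exact: pending_alive].
have : (#|S| < #|S :|: rpath g|)%N.
  apply: proper_card; apply/properP; split; first exact: subsetUl.
  by exists (rnode g); rewrite // !inE leqnn orbT.
move: hfuel; lia.
Qed.
End GrowingLoop.

Lemma uniq_map_inj_in (T1 T2 : eqType) (f : T1 -> T2) (s : seq T1) :
  uniq (map f s) -> {in s &, injective f}.
Proof.
elim: s => [//|a s IH] /= /andP[ha hu] x y.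
rewrite !inE => /orP[/eqP->|hx] /orP[/eqP->|hy] // e.
- by move: ha; rewrite e map_f.
- by move: ha; rewrite -e map_f.
- exact: IH.
Qed.

Lemma sum_by_label (V : nmodType) (I : eqType) (s : seq I) (n : nat) (f : I -> nat)
    (F : I -> V) : {in s, forall x, f x < n}%N ->
  \sum_(x <- s) F x = \sum_(i < n) \sum_(x <- s | f x == i) F x.
Proof.
move=> hf; rewrite (exchange_big_dep xpredT) //=; apply: eq_big_seq => x hx.
by rewrite (big_pred1 (Ordinal (hf x hx))) // => i; rewrite /= eq_sym -val_eqE.
Qed.

Section DoubleAnalysis.
Variables (R : realFieldType) (D : nat) (c : 'I_D -> R) (rs : seq (request D R)).
Hypothesis hwf : all (fun rho => rarr rho <= rdl rho) rs.
Hypothesis hdist : uniq (map (@rdl D R) rs).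
Hypothesis hc : forall u, 0 < c u.

Local Notation by_deadline := (fun x y : request D R => rdl x < rdl y).

Definition trigger_service (past : seq (service R D)) (rho : request D R) :
    service R D :=
  (double_grow c rs past rho D.+1 (rpath rho), rdl rho).

Definition double_step (past : seq (service R D)) (rho : request D R) :
    seq (service R D) :=
  if pending past (rdl rho) rho then rcons past (trigger_service past rho) else past.

Lemma pending_rcons (P : seq (service R D)) S t' t (g : request D R) :
  t <= t' -> pending (rcons P (S, t')) t g = pending P t g.
Proof. by move=> htt; rewrite /pending has_rcons /= ltNge htt. Qed.

(* Fixpoint characterisation: transmissions at later times do not affect what
   happens earlier, so the output F of the fold over a deadline-sorted list is
   the list of trigger services, computed w.r.t. F itself, of the requests
   pending in F at their own deadline. *)
Lemma fold_double_step (p : seq (request D R)) : sorted by_deadline p ->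
  let F := foldl double_step [::] p in
  F = [seq trigger_service F rho | rho <- p & pending F (rdl rho) rho].
Proof.
elim/last_ind: p => [//|p x IH] hs /=.
have hlt : all (fun y : request D R => rdl y < rdl x) p.
  move: hs; rewrite (sorted_pairwise (leT := by_deadline)); last first.
    by move=> a b d; exact: lt_trans.
  by rewrite -cats1 pairwise_cat allrel1r => /andP[].
have /IH /= {IH} : sorted by_deadline p by move: hs; rewrite -cats1 => /cat_sorted2[].
set F := foldl double_step [::] p => IH.
rewrite foldl_rcons -/F /double_step; case: ifP => hpx; last by rewrite filter_rcons hpx.
set F' := rcons F _.
have hpend t g : t <= rdl x -> pending F' t g = pending F t g by exact: pending_rcons.
have hserv y : rdl y <= rdl x -> trigger_service F' y = trigger_service F y.
  move=> hy; rewrite /trigger_service (double_grow_congr c rs (Q := F)) //.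
  by move=> g; exact: hpend.
rewrite filter_rcons hpend // hpx map_rcons hserv //; congr rcons.
have hlex y : y \in p -> rdl y <= rdl x by move=> hy; exact: ltW (allP hlt y hy).
rewrite [LHS]IH (eq_in_filter (a2 := fun y => pending F' (rdl y) y)).
  by apply/eq_in_map => y; rewrite mem_filter => /andP[_ /hlex /hserv ->].
by move=> y /hlex hy; rewrite hpend.
Qed.

Lemma sort_by_deadline : sorted by_deadline (sort (fun x y => rdl x <= rdl y) rs).
Proof.
set s := sort _ rs.
have hu : uniq (map (@rdl D R) s).
  by rewrite (perm_uniq (perm_map _ (permEl (perm_sort _ _)))).
suff : sorted <%O (map (@rdl D R) s) by rewrite sorted_map.
rewrite lt_sorted_uniq_le hu sorted_map; apply: sort_sorted => x y; exact: le_total.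
Qed.

Local Notation L := (Double c rs).

Definition triggers : seq (request D R) :=
  [seq rho <- sort (fun x y => rdl x <= rdl y) rs | pending L (rdl rho) rho].

Lemma Double_services : L = map (trigger_service L) triggers.
Proof. exact: (fold_double_step sort_by_deadline). Qed.

Lemma triggers_sorted : sorted by_deadline triggers.
Proof. by apply: sorted_filter sort_by_deadline => x y z; exact: lt_trans. Qed.

Lemma mem_triggers rho : (rho \in triggers) = (rho \in rs) && pending L (rdl rho) rho.
Proof. by rewrite mem_filter mem_sort andbC. Qed.

Lemma mem_Double st :
  st \in L -> exists2 rho, rho \in triggers & st = trigger_service L rho.
Proof. by rewrite {1}Double_services => /mapP. Qed.

Lemma trigger_in_Double rho :
  rho \in rs -> pending L (rdl rho) rho -> trigger_service L rho \in L.
Proof. by move=> hr hp; rewrite {2}Double_services map_f // mem_triggers hr. Qed.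

Lemma rdl_inj (x y : request D R) : x \in rs -> y \in rs -> rdl x = rdl y -> x = y.
Proof. by move=> hx hy; apply: (uniq_map_inj_in hdist). Qed.

Lemma trigger_service_rpath rho : rpath rho \subset (trigger_service L rho).1.
Proof. exact: grow_sub. Qed.

Lemma trigger_service_down_closed rho : down_closed (trigger_service L rho).1.
Proof. by apply: grow_down_closed; exact: rpath_down_closed. Qed.

Lemma trigger_service_rooted rho : rooted_subtree (trigger_service L rho).1.
Proof.
apply: (down_closed_rooted (v := rnode rho)); first exact: trigger_service_down_closed.
by apply: (subsetP (trigger_service_rpath rho)); exact: rpath_node.
Qed.

Lemma trigger_service_cost rho :
  set_cost c (trigger_service L rho).1 <= 2 * set_cost c (rpath rho).
Proof. by apply: grow_budget; have := set_cost_ge0 hc (rpath rho); lra. Qed.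

Lemma trigger_service_serves rho : rho \in rs -> satisfies (trigger_service L rho) rho.
Proof.
move=> hr; rewrite /satisfies (subsetP (trigger_service_rpath rho)) ?rpath_node //=.
by rewrite lexx andbT (allP hwf rho hr).
Qed.

(* Every request is served: either it triggers a service, or it was served
   before its deadline. *)
Lemma Double_serves g : g \in rs -> has (satisfies^~ g) L.
Proof.
move=> hg; case hp: (pending L (rdl g) g).
  apply/hasP; exists (trigger_service L g); first exact: trigger_in_Double.
  exact: trigger_service_serves.
move: hp; rewrite /pending (allP hwf g hg) /= => /negbFE.
by apply: sub_has => st /andP[].
Qed.

Lemma Double_feasible : feasible rs L.
Proof.
split; last by apply/allP => g /Double_serves.
by apply/allP => st /mem_Double[rho _ ->]; exact: trigger_service_rooted.
Qed.

Lemma Double_times_inj st1 st2 : st1 \in L -> st2 \in L -> st1.2 = st2.2 -> st1 = st2.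
Proof.
move=> /mem_Double[r1 + ->] /mem_Double[r2 + ->] /= e.
by rewrite !mem_triggers => /andP[h1 _] /andP[h2 _]; rewrite (rdl_inj h1 h2 e).
Qed.

Lemma pending_earlier g t t' :
  rarr g <= t -> t <= t' -> pending L t' g -> pending L t g.
Proof.
move=> ha htt /andP[_ hn]; apply/andP; split => //.
apply: contra hn; apply: sub_has => st /andP[h1 h2].
by rewrite h2 andbT; exact: lt_le_trans h1 htt.
Qed.

Lemma pending_alive g t : g \in rs -> pending L t g -> t <= rdl g.
Proof.
move=> hg hp; rewrite leNgt; apply/negP => hlt.
have hpg := pending_earlier (allP hwf g hg) (ltW hlt) hp.
move: hp => /andP[_ /negP]; apply; apply/hasP.
exists (trigger_service L g); first exact: trigger_in_Double.
by rewrite /= hlt; exact: trigger_service_serves.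
Qed.

(* Let rho' be a trigger pending at the deadline t of a trigger rho. A request
   g pending at t but not served by the service S of rho, and with
   d_g <= d_rho', lies on the path of rho': otherwise the service that
   eventually serves g, transmitted in (t, d_g], would also serve rho' before
   its deadline, as services are down-closed. *)
Lemma stopping_request_shallower rho rho' g :
  rho \in triggers -> rho' \in triggers -> g \in rs ->
  rarr rho' <= rdl rho -> pending L (rdl rho) g ->
  ~~ satisfies (trigger_service L rho) g -> rdl g <= rdl rho' ->
  (val (rnode g) <= val (rnode rho'))%N.
Proof.
rewrite !mem_triggers => /andP[hr hp] /andP[hr' hp'] hg harr hpg hng hdl.
rewrite leqNgt; apply/negP => hdeep.
have hgt : rdl g < rdl rho'.
  rewrite lt_neqAle hdl andbT; apply: contraTneq hdeep => /(rdl_inj hg hr') ->.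
  by rewrite ltnn.
have /hasP[st hst hsat] := Double_serves hg.
have /and3P[hin hat htd] := hsat.
have htau : rdl rho < st.2.
  case: (ltgtP st.2 (rdl rho)) => [hlt|//|heq]; exfalso.
  - by move: hpg => /andP[_ /hasP]; apply; exists st; rewrite ?hlt.
  - have hserv : trigger_service L rho \in L by exact: trigger_in_Double.
    by move: hng; rewrite -(Double_times_inj hst hserv heq) hsat.
have [r _ est] := mem_Double hst.
have hdc : down_closed st.1 by rewrite est; exact: trigger_service_down_closed.
move: hp' => /andP[_ /hasP]; apply; exists st => //.
rewrite (le_lt_trans htd hgt) /satisfies (hdc _ (rnode g)) 1?ltnW //=.
by rewrite (le_trans harr (ltW htau)) (ltW (le_lt_trans htd hgt)).
Qed.

(* At d_rho the trigger rho' is pending but not served, so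
   the loop stopped on a request g shallower than rho' (previous lemma); hence
   S u P_g is inside P_rho' and the stopping rule gives 2 w(rho) < w(rho'). *)
Lemma triggers_separated rho rho' :
  rho \in triggers -> rho' \in triggers ->
  rdl rho < rdl rho' -> rarr rho' <= rdl rho ->
  2 * set_cost c (rpath rho) < set_cost c (rpath rho').
Proof.
move=> hT hT'; have := hT; have := hT'; rewrite !mem_triggers.
move=> /andP[hr' hp'] /andP[hr hp] hlt harr.
set S := (trigger_service L rho).1.
have hpt' : pending L (rdl rho) rho' := pending_earlier harr (ltW hlt) hp'.
have hns' : ~~ satisfies (S, rdl rho) rho'.
  apply/negP => hs; move: hp' => /andP[_ /hasP]; apply.
  by exists (trigger_service L rho); [exact: trigger_in_Double | rewrite /= hlt].
have hfuel : (D < #|rpath rho| + D.+1)%N by lia.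
have [g [hg hpg hng hdl hstop]] :=
  grow_stop (fun g hg hp => pending_alive hg hp) hfuel hr' hpt' hns'.
have hshallow := stopping_request_shallower hT hT' hg harr hpg hng hdl.
have hrS : rnode rho' \notin S.
  apply: contra hns' => hin; rewrite /satisfies /= hin harr; exact: ltW.
have hsub : S :|: rpath g \subset rpath rho'.
  apply/subsetP => u; rewrite !inE => /orP[hu|hu]; last exact: leq_trans hu hshallow.
  rewrite leqNgt; apply: contra hrS => hdeep.
  exact: trigger_service_down_closed (ltnW hdeep) hu.
apply: (lt_le_trans hstop); rewrite -set_costU; exact: set_cost_sub.
Qed.

(* The charging bound for one service (S, t) of an arbitrary schedule: the
   triggers it serves all have t in their windows, so consecutive ones (by
   deadline) are separated; their weights are at most c(S) since S is a
   rooted subtree, and distinct, so there are at most D of them. *)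
Lemma charged_triggers_bound (st : service R D)
    (s : seq (request D R)) :
  rooted_subtree st.1 -> sorted by_deadline s -> {subset s <= triggers} ->
  all (satisfies st) s ->
  2 * \sum_(rho <- s) set_cost c (rpath rho) <= (4 - (2 ^+ D)^-1) * set_cost c st.1.
Proof.
move=> hroot hsorted hsub /allP hsat.
pose w (rho : request D R) := set_cost c (rpath rho).
have hdoubling : sorted (fun x y => 2 * x < y) (map w s).
  rewrite sorted_map; apply: (sub_in_sorted (P := mem s)) hsorted; last exact/allP.
  move=> x y hx hy hxy; apply: triggers_separated => //; try exact: hsub.
  have /andP[_ /andP[_ hxd]] := hsat x hx; have /andP[_ /andP[hay _]] := hsat y hy.
  exact: le_trans hay hxd.
rewrite -(big_map w xpredT id); apply: doubling_sum_bound => //.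
- apply/allP => _ /mapP[rho hrho ->]; rewrite set_cost_ge0 // set_cost_sub //.
  apply: down_closed_rpath; first exact: rooted_subtree_down_closed.
  by have /andP[] := hsat rho hrho.
- exact: set_cost_ge0.
- have hincr : sorted <%O (map w s).
    move: hdoubling; rewrite !sorted_map; apply: sub_sorted => x y.
    rewrite /relpre /=; have := set_cost_ge0 hc (rpath x); rewrite /w; lra.
  have : uniq (map w s) by move: hincr; rewrite lt_sorted_uniq_le => /andP[].
  pose node_weight (v : 'I_D) := set_cost c [set u : 'I_D | (val u <= val v)%N].
  rewrite (map_comp node_weight (@rnode D R)).
  move=> /map_uniq /card_uniqP; rewrite !size_map => <-.
  rewrite -[X in (_ <= X)%N](card_ord D); exact: max_card.
Qed.

Lemma Double_cost_le_triggers :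
  sched_cost c L <= \sum_(rho <- triggers) 2 * set_cost c (rpath rho).
Proof.
rewrite /sched_cost {1}Double_services big_map.
by apply: ler_sum => rho _; exact: trigger_service_cost.
Qed.

(* Charging each trigger to the first service of sch serving it, and bounding
   the charge of each service by charged_triggers_bound. *)
Lemma triggers_le_schedule (sch : seq (service R D)) :
  feasible rs sch ->
  \sum_(rho <- triggers) 2 * set_cost c (rpath rho) <=
    (4 - (2 ^+ D)^-1) * sched_cost c sch.
Proof.
move=> [hroot hsat].
pose first_server rho := find (fun st => satisfies st rho) sch.
have hfirst rho : rho \in triggers -> (first_server rho < size sch)%N.
  by rewrite mem_triggers -has_find => /andP[/(allP hsat)].
rewrite (sum_by_label _ hfirst) /sched_cost (big_nth (set0, 0)) big_mkord mulr_sumr.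
apply: ler_sum => i _; rewrite -big_filter -mulr_sumr.
apply: charged_triggers_bound => //.
- by apply: (allP hroot); exact: mem_nth.
- by apply: sorted_filter triggers_sorted => x y z; exact: lt_trans.
- by move=> rho; rewrite mem_filter => /andP[].
- apply/allP => rho; rewrite mem_filter => /andP[/eqP <- hT].
  have := hT; rewrite mem_triggers => /andP[/(allP hsat) hhas _].
  exact: nth_find hhas.
Qed.
End DoubleAnalysis.

Theorem mainTheorem3 (R : realFieldType) (D : nat) (hD : (0 < D)%N)
  (c : 'I_D -> R) (hc : forall u, 0 < c u)
  (rs : seq (request D R))
  (hwf : all (fun rho => rarr rho <= rdl rho) rs)
  (hdist : uniq (map (@rdl D R) rs)) :
  feasible rs (Double c rs) /\
  forall sch : seq (service R D), feasible rs sch ->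
    sched_cost c (Double c rs) <= (4 - (2 ^+ D)^-1) * sched_cost c sch.
Proof.
split; first exact: Double_feasible.
move=> sch hsch; apply: le_trans (triggers_le_schedule hwf hdist hc hsch).
exact: Double_cost_le_triggers.
Qed.
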